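(* Let $\alpha\in(0,\infty)\setminus\{1\}$. Consider a finite set of flows $\mathcal K$, each flow $k$ having rate $r_k>0$ and being associated to a beam $v_k\in V$; let $\mathcal K(v)=\{k: v_k=v\}$ and assume $\mathcal K(v)\neq\emptyset$ for every $v\in V$. Consider the problem $$\text{maximize } \sum_{v\in V}\sum_{k\in\mathcal K(v)} f_\alpha(r_k\gamma_v\delta_k)\quad\text{subject to } \gamma\in\mathrm{conv}(\mathcal Z),\ \delta\in\Delta,$$ where $f_\alpha(x)=x^{1-\alpha}/(1-\alpha)$, $\Delta=\{\delta\in[0,1]^{\mathcal K}: \sum_{k\in\mathcal K(v)}\delta_k=1 \ \forall v\in V\}$. Define $\phi_v=\big(\sum_{k\in\mathcal K(v)} r_k^{1/\alpha-1}\big)^{\alpha}$ and define $\theta_v,\kappa^\star_v$ recursively from the leaves upward: for $v$ with children set $C(v)=\{v':(v,v')\in E\}$ let $S_v=\sum_{v'\in C(v)}\theta_{v'}$ ($S_v=0$ for a leaf), $$\kappa^\star_v=\Big[1+\Big(\frac{1-\alpha}{\phi_v}S_v\Big)^{1/\alpha}\Big]^{-1},\qquad \theta_v=(\kappa^\star_v)^{1-\alpha}\frac{\phi_v}{1-\alpha}+(1-\kappa^\star_v)^{1-\alpha}S_v$$ (so that for a leaf $\kappa^\star_v=1$ and $\theta_v=\phi_v/(1-\alpha)$). Then the problem has a unique optimal solution $(\delta^\star,\gamma^\star)$, given by $$\delta^\star_k=\frac{r_k^{1/\alpha-1}}{\sum_{k'\in\mathcal K(v_k)} r_{k'}^{1/\alpha-1}},\qquad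 \gamma^\star_v=\kappa^\star_v\prod_{v'\in\mathcal A(v)}(1-\kappa^\star_{v'}).$$
   Context: $G=(V,E)$ is a finite directed rooted tree with vertex set $V=\{1,\dots,|V|\}$ and root $1$, edges oriented from parent to child. For $v\in V$: $\mathcal A(v)$ is the set of strict ancestors of $v$, $\bar{\mathcal A}(v)=\mathcal A(v)\cup\{v\}$, $\mathcal D(v)$ is the set of strict descendants of $v$, $\bar{\mathcal D}(v)=\mathcal D(v)\cup\{v\}$, and $d(v)$ is the number of children of $v$. $\mathcal Z=\{z\in\{0,1\}^{V}: z_v z_{v'}=0 \text{ for all } v\in V,\ v'\in\mathcal A(v)\}$ (admissible sets of simultaneously active beams) and $\mathrm{conv}(\mathcal Z)$ is its convex hull. $\gamma_v$ is the fraction of time beam $v$ is active and $\delta_k$ the fraction of beam $v_k$'s active time given to flow $k$; flow $k$ obtains throughput $r_k\gamma_{v_k}\delta_k$. *)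

From Stdlib Require Import Reals Lra List Arith Bool.
Import ListNotations.
Open Scope R_scope.

(* Vertices are 0..n-1 with root 0 (the paper's 1..|V| shifted by one).
   The tree is given by a parent map; flows are 0..nK-1. *)

Definition sumR (l : list nat) (f : nat -> R) : R :=
  fold_right (fun i acc => f i + acc) 0 l.

Definition verts (n : nat) : list nat := seq 0 n.

Definition is_tree (n : nat) (parent : nat -> nat) : Prop :=
  (0 < n)%nat /\
  forall v, (v < n)%nat -> v <> 0%nat ->
    (parent v < n)%nat /\ exists m, Nat.iter m parent v = 0%nat.

Definition children (n : nat) (parent : nat -> nat) (v : nat) : list nat :=
  filter (fun c => andb (negb (Nat.eqb c 0)) (Nat.eqb (parent c) v)) (verts n).

(* Strict ancestors of v: the path v -> parent v -> ... -> root (excluding v).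
   Fuel n suffices for a tree on n vertices. *)
Fixpoint anc_fuel (parent : nat -> nat) (fuel v : nat) : list nat :=
  match fuel with
  | O => []
  | S f => if Nat.eqb v 0 then [] else parent v :: anc_fuel parent f (parent v)
  end.

Definition ancestors (n : nat) (parent : nat -> nat) (v : nat) : list nat :=
  anc_fuel parent n v.

(* Admissible sets Z: 0/1 vectors with z_v z_{v'} = 0 for v' ancestor of v. *)
Definition admissible (n : nat) (parent : nat -> nat) (z : nat -> bool) : Prop :=
  forall v, (v < n)%nat -> forall u, In u (ancestors n parent v) ->
    z v = true -> z u = false.

Definition in_convZ (n : nat) (parent : nat -> nat) (gamma : nat -> R) : Prop :=
  exists l : list (R * (nat -> bool)),
    Forall (fun p => 0 <= fst p /\ admissible n parent (snd p)) l /\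
    fold_right (fun (p : R * (nat -> bool)) (acc : R) => fst p + acc) 0 l = 1 /\
    forall v, (v < n)%nat ->
      gamma v = fold_right (fun (p : R * (nat -> bool)) (acc : R) => fst p * (if snd p v then 1 else 0) + acc) 0 l.

Definition flows_of (nK : nat) (beam : nat -> nat) (v : nat) : list nat :=
  filter (fun k => Nat.eqb (beam k) v) (seq 0 nK).

Definition in_Delta (n nK : nat) (beam : nat -> nat) (delta : nat -> R) : Prop :=
  (forall k, (k < nK)%nat -> 0 <= delta k <= 1) /\
  (forall v, (v < n)%nat -> sumR (flows_of nK beam v) delta = 1).

(* Extended reals for the objective: None = -infinity. *)
Definition eadd (a b : option R) : option R :=
  match a, b with Some x, Some y => Some (x + y) | _, _ => None end.

Definition esum (l : list nat) (f : nat -> option R) : option R :=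
  fold_right (fun i acc => eadd (f i) acc) (Some 0) l.

Definition ele (a b : option R) : Prop :=
  match a, b with
  | None, _ => True
  | Some _, None => False
  | Some x, Some y => x <= y
  end.

(* f_alpha(x) = x^(1-alpha)/(1-alpha) for x >= 0, with its natural value at 0:
   0 if alpha < 1, -infinity if alpha > 1. *)
Definition f_alpha (alpha x : R) : option R :=
  if Rlt_dec 0 x then Some (Rpower x (1 - alpha) / (1 - alpha))
  else if Rlt_dec alpha 1 then Some 0 else None.

Definition objective (n nK : nat) (beam : nat -> nat) (rate : nat -> R) (alpha : R)
  (delta gamma : nat -> R) : option R :=
  esum (verts n) (fun v =>
    esum (flows_of nK beam v) (fun k => f_alpha alpha (rate k * gamma v * delta k))).

Definition feasible n nK parent beam (delta gamma : nat -> R) : Prop :=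
  in_convZ n parent gamma /\ in_Delta n nK beam delta.

Definition optimal n nK parent beam rate alpha (delta gamma : nat -> R) : Prop :=
  feasible n nK parent beam delta gamma /\
  forall delta' gamma', feasible n nK parent beam delta' gamma' ->
    ele (objective n nK beam rate alpha delta' gamma')
        (objective n nK beam rate alpha delta gamma).

Definition phi nK beam (rate : nat -> R) alpha (v : nat) : R :=
  Rpower (sumR (flows_of nK beam v) (fun k => Rpower (rate k) (1/alpha - 1))) alpha.

(* (theta_v, kappa*_v), computed from the leaves upward (fuel = n bounds the
   height of the tree). For a leaf: kappa = 1, theta = phi/(1-alpha). *)
Fixpoint theta_kappa n parent nK beam rate alpha (fuel v : nat) : R * R :=
  let ph := phi nK beam rate alpha v in
  match fuel with
  | O => (ph / (1 - alpha), 1)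
  | S f =>
    match children n parent v with
    | [] => (ph / (1 - alpha), 1)
    | cs =>
      let Sv := sumR cs (fun c => fst (theta_kappa n parent nK beam rate alpha f c)) in
      let kap := / (1 + Rpower ((1 - alpha) / ph * Sv) (1 / alpha)) in
      (Rpower kap (1 - alpha) * ph / (1 - alpha) + Rpower (1 - kap) (1 - alpha) * Sv, kap)
    end
  end.

Definition kappa_star n parent nK beam rate alpha (v : nat) : R :=
  snd (theta_kappa n parent nK beam rate alpha n v).

Definition theta n parent nK beam rate alpha (v : nat) : R :=
  fst (theta_kappa n parent nK beam rate alpha n v).

Definition delta_star nK beam (rate : nat -> R) alpha (k : nat) : R :=
  Rpower (rate k) (1/alpha - 1) /
  sumR (flows_of nK beam (beam k)) (fun k' => Rpower (rate k') (1/alpha - 1)).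

Definition prodR (l : list nat) (f : nat -> R) : R :=
  fold_right (fun i acc => f i * acc) 1 l.

Definition gamma_star n parent nK beam rate alpha (v : nat) : R :=
  kappa_star n parent nK beam rate alpha v *
  prodR (ancestors n parent v) (fun u => 1 - kappa_star n parent nK beam rate alpha u).

(* The objective is concave, so the candidate (delta_star, gamma_star) is optimal once
   the linearisation of the objective at it is maximised there over the feasible set.
   Under delta_star all flows of a beam v have the same marginal utility per unit of beam
   time, the price c_v = phi_v gamma_star_v^(-alpha), so the linearisation reduces to the
   linear form gamma |-> sum_v c_v gamma_v on conv(Z).  The recursion for kappa_star is the
   first-order condition making prices conserved along the tree: at an internal vertex c_v
   is the sum of the prices of its children.  Hence sum_v c_v z_v <= c_root for every
   admissible z, while sum_v c_v gamma_star_v = c_root; and gamma_star lies in conv(Z)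
   because it is realised by nested intervals of [0,1).  Strict concavity of f_alpha then
   forces every optimum to have the same throughputs, hence to be (delta_star, gamma_star). *)

From Stdlib Require Import Reals Lra Lia List Bool Wf_nat FinFun
  Sorting.Mergesort Sorting.Sorted Permutation.
Import ListNotations.
Open Scope R_scope.

(** * Finite sums and products *)

Lemma sumR_ext l f g : (forall i, In i l -> f i = g i) -> sumR l f = sumR l g.
Proof. induction l; simpl; intros H; auto. rewrite H, IHl; auto. Qed.

Lemma sumR_plus l f g : sumR l (fun i => f i + g i) = sumR l f + sumR l g.
Proof. induction l; simpl; lra. Qed.

Lemma sumR_minus l f g : sumR l (fun i => f i - g i) = sumR l f - sumR l g.
Proof. induction l; simpl; lra. Qed.

Lemma sumR_scal l c f : sumR l (fun i => c * f i) = c * sumR l f.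
Proof. induction l; simpl; [lra|]. rewrite IHl; ring. Qed.

Lemma sumR_const0 l : sumR l (fun _ => 0) = 0.
Proof. induction l; simpl; lra. Qed.

Lemma sumR_le l f g : (forall i, In i l -> f i <= g i) -> sumR l f <= sumR l g.
Proof.
  induction l as [|a l IH]; simpl; intros H; [lra|].
  pose proof (H a (or_introl eq_refl)).
  pose proof (IH (fun i Hi => H i (or_intror Hi))). lra.
Qed.

Lemma sumR_nonneg l f : (forall i, In i l -> 0 <= f i) -> 0 <= sumR l f.
Proof. intros H. rewrite <- (sumR_const0 l). apply sumR_le; auto. Qed.

Lemma sumR_pos l f : l <> [] -> (forall i, In i l -> 0 < f i) -> 0 < sumR l f.
Proof.
  destruct l as [|x l]; [congruence|]. intros _ H. simpl.
  pose proof (H x (or_introl eq_refl)).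
  pose proof (sumR_nonneg l f (fun i Hi => Rlt_le _ _ (H i (or_intror Hi)))). lra.
Qed.

Lemma sumR_ge_term l f x : (forall i, In i l -> 0 <= f i) -> In x l -> f x <= sumR l f.
Proof.
  induction l as [|a l IH]; simpl; intros H Hx; [contradiction|].
  pose proof (sumR_nonneg l f (fun i Hi => H i (or_intror Hi))).
  pose proof (H a (or_introl eq_refl)).
  destruct Hx as [<-|Hx]; [lra|].
  pose proof (IH (fun i Hi => H i (or_intror Hi)) Hx). lra.
Qed.

Lemma sumR_nonneg_eq0 l f : (forall i, In i l -> 0 <= f i) -> sumR l f <= 0 ->
  forall i, In i l -> f i = 0.
Proof. intros H Hs i Hi. pose proof (sumR_ge_term l f i H Hi). pose proof (H i Hi). lra. Qed.

Lemma sumR_filter p l f : sumR (filter p l) f = sumR l (fun i => if p i then f i else 0).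
Proof. induction l as [|a l IH]; simpl; auto. destruct (p a); simpl; rewrite IH; lra. Qed.

Lemma sumR_swap l1 l2 (F : nat -> nat -> R) :
  sumR l1 (fun i => sumR l2 (F i)) = sumR l2 (fun j => sumR l1 (fun i => F i j)).
Proof.
  induction l1 as [|a l1 IH]; simpl.
  - symmetry. apply sumR_const0.
  - rewrite IH, <- sumR_plus. reflexivity.
Qed.

Lemma sumR_single l x f : NoDup l -> In x l -> (forall i, In i l -> i <> x -> f i = 0) ->
  sumR l f = f x.
Proof.
  induction l as [|a l IH]; simpl; intros Hnd Hx H; [contradiction|].
  inversion Hnd as [|? ? Ha Hnd']; subst.
  destruct Hx as [<-|Hx].
  - rewrite (sumR_ext l f (fun _ => 0)), sumR_const0; [lra|].
    intros i Hi. apply H; auto. intros ->. contradiction.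
  - rewrite H, IH; auto; [lra|]. intros ->. contradiction.
Qed.

Lemma prodR_ext l f g : (forall i, In i l -> f i = g i) -> prodR l f = prodR l g.
Proof. induction l; simpl; intros H; auto. rewrite H, IHl; auto. Qed.

Lemma prodR_const1 l : prodR l (fun _ => 1) = 1.
Proof. induction l; simpl; auto. rewrite IHl; lra. Qed.

Lemma prodR_unit_interval l f : (forall i, In i l -> 0 <= f i <= 1) -> 0 <= prodR l f <= 1.
Proof.
  induction l as [|a l IH]; simpl; intros H; [lra|].
  pose proof (H a (or_introl eq_refl)).
  pose proof (IH (fun i Hi => H i (or_intror Hi))). split; nra.
Qed.

Lemma In_verts v n : In v (verts n) <-> (v < n)%nat.
Proof. unfold verts. rewrite in_seq. lia. Qed.

Lemma In_flows_of nK beam v k : In k (flows_of nK beam v) <-> (k < nK)%nat /\ beam k = v.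
Proof. unfold flows_of. rewrite filter_In, in_seq, Nat.eqb_eq. lia. Qed.

Lemma In_children n parent v c :
  In c (children n parent v) <-> (c < n)%nat /\ c <> 0%nat /\ parent c = v.
Proof.
  unfold children.
  rewrite filter_In, In_verts, andb_true_iff, negb_true_iff, Nat.eqb_eq, Nat.eqb_neq. tauto.
Qed.

(** * Rooted trees given by a parent map *)

Section Tree.
Variable n : nat.
Variable parent : nat -> nat.
Hypothesis Htree : is_tree n parent.

Definition is_depth (v d : nat) : Prop :=
  Nat.iter d parent v = 0%nat /\ forall k, Nat.iter k parent v = 0%nat -> (d <= k)%nat.

Lemma is_depth_unique v d1 d2 : is_depth v d1 -> is_depth v d2 -> d1 = d2.
Proof. intros [H1 H1'] [H2 H2']. specialize (H1' _ H2). specialize (H2' _ H1). lia. Qed.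

Lemma is_depth_exists v : (v < n)%nat -> exists d, is_depth v d.
Proof.
  intros Hv.
  assert (Hreach : exists m, Nat.iter m parent v = 0%nat).
  { destruct (Nat.eq_dec v 0) as [->|Hv0]; [exists 0%nat; reflexivity|].
    apply (proj2 Htree v Hv Hv0). }
  destruct (dec_inh_nat_subset_has_unique_least_element _
              (fun m => Nat.eq_decidable (Nat.iter m parent v) 0) Hreach) as [d [Hd _]].
  exists d. exact Hd.
Qed.

Lemma iter_parent_lt v k : (v < n)%nat ->
  (forall j, (j < k)%nat -> Nat.iter j parent v <> 0%nat) -> (Nat.iter k parent v < n)%nat.
Proof.
  intros Hv. induction k as [|k IH]; intros Hne; simpl; auto.
  apply (proj2 Htree); [apply IH; intros; apply Hne; lia | apply Hne; lia].
Qed.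

(* The vertices [parent^k v], k < d, are distinct non-root vertices. *)
Lemma is_depth_lt v d : (v < n)%nat -> is_depth v d -> (d < n)%nat.
Proof.
  intros Hv [Hd Hmin].
  assert (Hne : forall k, (k < d)%nat -> Nat.iter k parent v <> 0%nat).
  { intros k Hk H0. specialize (Hmin k H0). lia. }
  assert (Hinj : forall i j, (i < j < d)%nat -> Nat.iter i parent v <> Nat.iter j parent v).
  { intros i j Hij Heq. apply (Hne (d - j + i)%nat); [lia|].
    rewrite Nat.iter_add, Heq, <- Nat.iter_add.
    replace (d - j + j)%nat with d by lia. exact Hd. }
  assert (Hnd : NoDup (map (fun k => Nat.iter k parent v) (seq 0 d))).
  { apply Injective_map_NoDup_in; [|apply seq_NoDup].
    intros i j Hi Hj Heq. rewrite in_seq in Hi, Hj.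
    destruct (Nat.lt_trichotomy i j) as [h|[h|h]]; auto;
      [exfalso; apply (Hinj i j) | exfalso; apply (Hinj j i)]; auto; lia. }
  pose proof (NoDup_incl_length Hnd (l' := seq 1 (n - 1))) as Hlen.
  rewrite length_map, !length_seq in Hlen.
  enough (d <= n - 1)%nat by lia. apply Hlen.
  intros x Hx. apply in_map_iff in Hx. destruct Hx as [k [<- Hk]]. rewrite in_seq in Hk.
  rewrite in_seq.
  pose proof (iter_parent_lt v k Hv (fun j Hj => Hne j ltac:(lia))).
  pose proof (Hne k ltac:(lia)). lia.
Qed.

Lemma is_depth_parent c d : c <> 0%nat -> is_depth c d ->
  d = S (d - 1) /\ is_depth (parent c) (d - 1).
Proof.
  intros Hc0 [Hd Hmin]. destruct d as [|d]; [simpl in Hd; congruence|].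
  simpl Nat.sub. rewrite Nat.sub_0_r. split; [reflexivity|]. split.
  - rewrite <- Nat.iter_succ_r. exact Hd.
  - intros k Hk. rewrite <- Nat.iter_succ_r in Hk. specialize (Hmin _ Hk). lia.
Qed.

Lemma is_depth_child v c d : is_depth v d -> In c (children n parent v) -> is_depth c (S d).
Proof.
  intros Hd Hc. apply In_children in Hc. destruct Hc as [Hcn [Hc0 Hpc]].
  destruct (is_depth_exists c Hcn) as [d' Hd'].
  destruct (is_depth_parent c d' Hc0 Hd') as [Hd'S Hpd]. rewrite Hpc in Hpd.
  rewrite (is_depth_unique _ _ _ Hd Hpd), <- Hd'S. exact Hd'.
Qed.

Lemma anc_fuel_stable m v f : Nat.iter m parent v = 0%nat -> (m <= f)%nat ->
  anc_fuel parent (S f) v = anc_fuel parent f v.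
Proof.
  revert v f. induction m as [|m IH]; intros v f Hm Hf.
  - simpl in Hm. subst. destruct f; reflexivity.
  - destruct f as [|f]; [lia|]. simpl. destruct (Nat.eqb v 0); auto. f_equal.
    apply IH; [rewrite <- Nat.iter_succ_r; exact Hm | lia].
Qed.

Lemma ancestors_cons c : (c < n)%nat -> c <> 0%nat ->
  ancestors n parent c = parent c :: ancestors n parent (parent c).
Proof.
  intros Hc Hc0. destruct (is_depth_exists c Hc) as [d Hd].
  pose proof (is_depth_lt c d Hc Hd) as Hdn.
  destruct (is_depth_parent c d Hc0 Hd) as [HdS [Hpd _]].
  unfold ancestors. destruct n as [|m]; [lia|]. simpl.
  apply Nat.eqb_neq in Hc0. rewrite Hc0. f_equal.
  symmetry. apply (anc_fuel_stable (d - 1)); auto. lia.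
Qed.

Lemma ancestors_root : ancestors n parent 0 = [].
Proof. unfold ancestors. destruct Htree as [Hn _]. destruct n; [lia|]. reflexivity. Qed.

Lemma parent_lt c : (c < n)%nat -> c <> 0%nat -> (parent c < n)%nat.
Proof. intros. apply (proj2 Htree); auto. Qed.

Lemma children_parent c : (c < n)%nat -> c <> 0%nat -> In c (children n parent (parent c)).
Proof. intros. apply In_children. auto. Qed.

(* Every non-root vertex is the child of exactly one vertex. *)
Lemma sumR_children (g : nat -> R) :
  sumR (verts n) (fun v => sumR (children n parent v) g) = sumR (verts n) g - g 0%nat.
Proof.
  unfold children at 1.
  rewrite (sumR_ext _ _ (fun v => sumR (verts n) (fun c =>
     if (negb (Nat.eqb c 0) && Nat.eqb (parent c) v)%bool then g c else 0)))
    by (intros; apply sumR_filter).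
  rewrite sumR_swap.
  rewrite (sumR_ext _ _ (fun c => if Nat.eqb c 0 then 0 else g c)).
  - destruct n as [|m] eqn:En; [destruct Htree; lia|].
    unfold verts. rewrite <- cons_seq, <- seq_shift. simpl.
    rewrite (sumR_ext _ _ g); [lra|].
    intros i Hi. apply in_map_iff in Hi. destruct Hi as [x [<- _]]. reflexivity.
  - intros c Hc. apply In_verts in Hc.
    destruct (Nat.eqb_spec c 0) as [_|Hc0]; simpl; [apply sumR_const0|].
    rewrite (sumR_single _ (parent c)).
    + rewrite Nat.eqb_refl. reflexivity.
    + apply seq_NoDup.
    + apply In_verts, parent_lt; auto.
    + intros i _ Hi. destruct (Nat.eqb_spec (parent c) i); [congruence|reflexivity].
Qed.

End Tree.

(** * Real powers and concavity of [f_alpha] *)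

Lemma Rpower_pos x y : 0 < Rpower x y.
Proof. apply exp_pos. Qed.

Lemma Rpower_base1 e : Rpower 1 e = 1.
Proof. unfold Rpower. rewrite ln_1, Rmult_0_r, exp_0. reflexivity. Qed.

Lemma Rpower_one_sub x alpha : 0 < x -> Rpower x (1 - alpha) = x * Rpower x (- alpha).
Proof.
  intros Hx. replace (1 - alpha) with (1 + - alpha) by ring.
  rewrite Rpower_plus, Rpower_1; auto.
Qed.

Lemma ln_le_sub1 y : 0 < y -> ln y <= y - 1.
Proof. intros Hy. pose proof (exp_ineq1_le (ln y)). rewrite exp_ln in H by exact Hy. lra. Qed.

Lemma ln_lt_sub1 y : 0 < y -> y <> 1 -> ln y < y - 1.
Proof.
  intros Hy Hy1. pose proof (exp_ineq1 (ln y) (ln_neq_0 y Hy1 Hy)).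
  rewrite exp_ln in H by exact Hy. lra.
Qed.

(* Weighted AM-GM: [ln] is concave, so [a ln (t/m) + (1-a) ln (1/m) < 0] for
   [m = a t + (1 - a)]. *)
Lemma Rpower_lt_bernoulli a t : 0 < a < 1 -> 0 < t -> t <> 1 -> Rpower t a < 1 + a * (t - 1).
Proof.
  intros Ha Ht Ht1. set (m := 1 + a * (t - 1)). assert (Hm : 0 < m) by (unfold m; nra).
  assert (Htm : t / m <> 1).
  { intros Htm. apply Ht1. assert (Hmt : t = m) by (field_simplify_eq in Htm; lra).
    unfold m in Hmt. nra. }
  pose proof (ln_lt_sub1 (t / m) ltac:(apply Rdiv_lt_0_compat; lra) Htm).
  pose proof (ln_le_sub1 (/ m) ltac:(apply Rinv_0_lt_compat; lra)).
  unfold Rdiv in *. rewrite ln_mult in H by (try apply Rinv_0_lt_compat; lra).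
  rewrite ln_Rinv in H, H0 by lra.
  assert (Hsum : a * (t * / m - 1) + (1 - a) * (/ m - 1) = 0) by (unfold m in *; field; lra).
  assert (Hlog : a * ln t < ln m) by nra.
  unfold Rpower. rewrite <- (exp_ln m) by exact Hm. apply exp_increasing. lra.
Qed.

Lemma Rpower_gt_bernoulli a t : a < 0 -> 0 < t -> t <> 1 -> 1 + a * (t - 1) < Rpower t a.
Proof.
  intros Ha Ht Ht1. pose proof (ln_lt_sub1 t Ht Ht1). pose proof (exp_ineq1_le (a * ln t)).
  unfold Rpower. nra.
Qed.

Lemma Rpower_div_lt_bernoulli a t : a < 1 -> a <> 0 -> 0 < t -> t <> 1 ->
  Rpower t a / a < 1 / a + (t - 1).
Proof.
  intros Ha1 Ha0 Ht Ht1.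
  replace (1 / a + (t - 1)) with ((1 + a * (t - 1)) * / a) by (field; exact Ha0).
  unfold Rdiv. destruct (Rlt_or_le a 0) as [Ha|Ha].
  - pose proof (Rpower_gt_bernoulli a t Ha Ht Ht1).
    pose proof (Rinv_lt_0_compat a Ha). nra.
  - pose proof (Rpower_lt_bernoulli a t ltac:(lra) Ht Ht1).
    apply Rmult_lt_compat_r; [apply Rinv_0_lt_compat; lra | exact H].
Qed.

(* At [x = 0], [f_alpha] is [0] (below every tangent) if [alpha < 1] and [-infinity]
   if [alpha > 1]. *)
Lemma f_alpha_lt_tangent alpha xs x y : 0 < alpha -> alpha <> 1 -> 0 < xs -> 0 <= x -> x <> xs ->
  f_alpha alpha x = Some y ->
  y < Rpower xs (1 - alpha) / (1 - alpha) + Rpower xs (- alpha) * (x - xs).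
Proof.
  intros Ha Ha1 Hxs Hx Hne Hf. unfold f_alpha in Hf.
  pose proof (Rpower_one_sub xs alpha Hxs) as Hsplit.
  assert (HA : 0 < Rpower xs (1 - alpha)) by apply Rpower_pos.
  destruct (Rlt_dec 0 x) as [Hx0|Hx0].
  - injection Hf as <-. set (t := x / xs).
    assert (Hxt : x = xs * t) by (unfold t; field; lra).
    assert (Ht1 : t <> 1) by (intros Ht; apply Hne; rewrite Hxt, Ht; ring).
    pose proof (Rpower_div_lt_bernoulli (1 - alpha) t ltac:(lra) ltac:(lra)
                  ltac:(unfold t; apply Rdiv_lt_0_compat; lra) Ht1) as Hb.
    rewrite Hxt, <- Rpower_mult_distr by (lra || (unfold t; apply Rdiv_lt_0_compat; lra)).
    replace (Rpower xs (1 - alpha) / (1 - alpha) + Rpower xs (- alpha) * (xs * t - xs))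
      with (Rpower xs (1 - alpha) * (1 / (1 - alpha) + (t - 1))) by (rewrite Hsplit; field; lra).
    replace (Rpower xs (1 - alpha) * Rpower t (1 - alpha) / (1 - alpha))
      with (Rpower xs (1 - alpha) * (Rpower t (1 - alpha) / (1 - alpha))) by (field; lra).
    apply Rmult_lt_compat_l; assumption.
  - assert (x = 0) by lra. subst x. destruct (Rlt_dec alpha 1); [|discriminate].
    injection Hf as <-.
    replace (Rpower xs (1 - alpha) / (1 - alpha) + Rpower xs (- alpha) * (0 - xs))
      with (Rpower xs (1 - alpha) * (1 / (1 - alpha) - 1)) by (rewrite Hsplit; field; lra).
    apply Rmult_lt_0_compat; [exact HA|].
    assert (1 < 1 / (1 - alpha)).
    { unfold Rdiv. rewrite Rmult_1_l, <- Rinv_1. apply Rinv_lt_contravar; lra. }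
    lra.
Qed.

Lemma f_alpha_le_tangent alpha xs x y : 0 < alpha -> alpha <> 1 -> 0 < xs -> 0 <= x ->
  f_alpha alpha x = Some y ->
  y <= Rpower xs (1 - alpha) / (1 - alpha) + Rpower xs (- alpha) * (x - xs).
Proof.
  intros Ha Ha1 Hxs Hx Hf. destruct (Req_dec x xs) as [->|Hne].
  - unfold f_alpha in Hf. destruct (Rlt_dec 0 xs); [|lra]. injection Hf as <-. lra.
  - left. apply (f_alpha_lt_tangent alpha xs x y); auto.
Qed.

(** * Convex combinations of admissible sets *)

Definition weight_sum (l : list (R * (nat -> bool))) : R :=
  fold_right (fun (p : R * (nat -> bool)) (acc : R) => fst p + acc) 0 l.

Definition mixture (l : list (R * (nat -> bool))) (v : nat) : R :=
  fold_right (fun (p : R * (nat -> bool)) (acc : R) =>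
                fst p * (if snd p v then 1 else 0) + acc) 0 l.

Definition in_interval (lo hi x : R) : bool :=
  if Rle_dec lo x then if Rlt_dec x hi then true else false else false.

Fixpoint gaps (s : list R) : list (R * R) :=
  match s with
  | x :: ((y :: _) as t) => (x, y) :: gaps t
  | _ => []
  end.

Definition gap_length (s : list R) (lo hi : R) : R :=
  fold_right (fun p acc => (snd p - fst p) * (if in_interval lo hi (fst p) then 1 else 0) + acc)
    0 (gaps s).

Lemma gap_length_ext s lo hi lo' hi' :
  (forall z, In z s -> in_interval lo hi z = in_interval lo' hi' z) ->
  gap_length s lo hi = gap_length s lo' hi'.
Proof.
  unfold gap_length. induction s as [|x [|y t] IH]; intros H; try reflexivity.
  simpl. rewrite (H x) by (left; reflexivity). f_equal.
  apply IH. intros z Hz. apply H. right. exact Hz.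
Qed.

Lemma gap_length_empty s lo hi : hi <= lo -> gap_length s lo hi = 0.
Proof.
  intros Hhl. unfold gap_length. induction s as [|x [|y t] IH]; try reflexivity.
  simpl. simpl in IH. rewrite IH. unfold in_interval.
  destruct (Rle_dec lo x); [destruct (Rlt_dec x hi)|]; lra.
Qed.

Lemma gap_length_sorted s lo hi : StronglySorted Rle s ->
  In lo s -> In hi s -> lo <= hi -> gap_length s lo hi = hi - lo.
Proof.
  revert lo hi. induction s as [|x [|y t] IH]; intros lo hi Hs Hlo Hhi Hlh; [destruct Hlo| |].
  - destruct Hlo as [<-|[]]. destruct Hhi as [<-|[]]. unfold gap_length. simpl. ring.
  - apply StronglySorted_inv in Hs. destruct Hs as [Hs Hx]. rewrite Forall_forall in Hx.
    assert (Hy : forall z, In z (y :: t) -> y <= z).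
    { intros z [<-|Hz]; [lra|]. apply StronglySorted_inv in Hs.
      destruct Hs as [_ Hy]. rewrite Forall_forall in Hy. auto. }
    change (gap_length (x :: y :: t) lo hi)
      with ((y - x) * (if in_interval lo hi x then 1 else 0) + gap_length (y :: t) lo hi).
    destruct (Rlt_dec x lo) as [Hxlo|Hxlo].
    + assert (Hlo' : In lo (y :: t)) by (destruct Hlo; [lra|auto]).
      assert (Hhi' : In hi (y :: t)) by (destruct Hhi; [lra|auto]).
      rewrite IH by auto. unfold in_interval. destruct (Rle_dec lo x); [lra|]. ring.
    + assert (Hxl : lo = x) by (destruct Hlo as [|Hlo]; [auto|]; pose proof (Hx lo Hlo); lra).
      subst lo. destruct (Req_dec hi x) as [->|Hhx].
      * rewrite gap_length_empty by lra. unfold in_interval.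
        destruct (Rle_dec x x); [destruct (Rlt_dec x x)|]; lra.
      * assert (Hhi' : In hi (y :: t)) by (destruct Hhi; [congruence|auto]).
        pose proof (Hx y (or_introl eq_refl)). pose proof (Hy hi Hhi').
        rewrite (gap_length_ext _ x hi y hi), IH; auto; [|left; reflexivity|].
        2: { intros z Hz. pose proof (Hy z Hz). unfold in_interval.
             destruct (Rle_dec x z), (Rle_dec y z); lra || reflexivity. }
        unfold in_interval. destruct (Rle_dec x x); [|lra].
        destruct (Rlt_dec x hi); [ring|lra].
Qed.

Lemma gaps_sorted s x y : StronglySorted Rle s -> In (x, y) (gaps s) -> x <= y.
Proof.
  induction s as [|a [|b t] IH]; intros Hs Hxy; try contradiction.
  apply StronglySorted_inv in Hs. destruct Hs as [Hs Ha].
  destruct Hxy as [Hxy|Hxy].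
  - injection Hxy as <- <-. rewrite Forall_forall in Ha. apply Ha. left. reflexivity.
  - apply IH; auto.
Qed.

Lemma fold_right_map {A B C : Type} (f : B -> C -> C) (g : A -> B) c l :
  fold_right f c (map g l) = fold_right (fun a => f (g a)) c l.
Proof. induction l as [|a l IH]; simpl; congruence. Qed.

Module RLeBool <: Orders.TotalLeBool'.
Definition t := R.
Definition leb (x y : R) : bool := if Rle_dec x y then true else false.
Lemma leb_total : forall x y, leb x y = true \/ leb y x = true.
Proof. intros x y. unfold leb. destruct (Rle_dec x y), (Rle_dec y x); auto; lra. Qed.
End RLeBool.
Module RSort := Sort RLeBool.

Lemma sort_R_spec (B : list R) :
  StronglySorted Rle (RSort.sort B) /\ forall x, In x (RSort.sort B) <-> In x B.
Proof.
  split.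
  - assert (Hleb : forall x y, RLeBool.leb x y = true -> x <= y).
    { intros x y. unfold RLeBool.leb. destruct (Rle_dec x y); [auto|discriminate]. }
    assert (Htrans : RelationClasses.Transitive (fun x y => is_true (RLeBool.leb x y))).
    { intros x y z Hxy Hyz. apply Hleb in Hxy, Hyz. unfold is_true, RLeBool.leb.
      destruct (Rle_dec x z); [reflexivity|lra]. }
    pose proof (RSort.StronglySorted_sort B Htrans) as Hs.
    induction Hs as [|a l _ IH Ha]; constructor; auto.
    rewrite Forall_forall in Ha |- *. intros x Hx. apply Hleb, Ha, Hx.
  - intros x. split; apply Permutation_in;
      [apply Permutation_sym|]; apply RSort.Permuted_sort.
Qed.

(* Drawing [x] uniformly from [0,1) and activating every [v] with [x] in [lo v, hi v)
   realises the lengths [hi v - lo v]; the breakpoints discretise the draw. *)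
Lemma interval_lengths_convex n (lo hi : nat -> R) :
  (forall v, (v < n)%nat -> 0 <= lo v <= hi v /\ hi v <= 1) ->
  exists l : list (R * (nat -> bool)),
    Forall (fun p => 0 <= fst p /\ exists x, snd p = fun v => in_interval (lo v) (hi v) x) l /\
    weight_sum l = 1 /\ forall v, (v < n)%nat -> hi v - lo v = mixture l v.
Proof.
  intros Hlh.
  set (B := 0 :: 1 :: flat_map (fun v => [lo v; hi v]) (verts n)).
  destruct (sort_R_spec B) as [Hs HsB]. set (s := RSort.sort B) in *.
  assert (HlohiB : forall v, (v < n)%nat -> In (lo v) s /\ In (hi v) s).
  { intros v Hv. rewrite !HsB. split; right; right; apply in_flat_map;
      exists v; (split; [apply In_verts; exact Hv | simpl; auto]). }
  set (w x := if in_interval 0 1 x then 1 else 0).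
  exists (map (fun p => ((snd p - fst p) * w (fst p),
                        fun v => in_interval (lo v) (hi v) (fst p))) (gaps s)).
  split; [|split].
  - apply Forall_forall. intros q Hq. apply in_map_iff in Hq.
    destruct Hq as [[x y] [<- Hxy]]. simpl. split; [|exists x; reflexivity].
    pose proof (gaps_sorted s x y Hs Hxy).
    unfold w. destruct (in_interval 0 1 x); nra.
  - unfold weight_sum. rewrite fold_right_map. transitivity (gap_length s 0 1); [reflexivity|].
    rewrite gap_length_sorted; auto; [ring | apply HsB; left | apply HsB; right; left | lra];
      reflexivity.
  - intros v Hv. unfold mixture. rewrite fold_right_map.
    destruct (HlohiB v Hv) as [Hlo Hhi]. specialize (Hlh v Hv).
    rewrite <- (gap_length_sorted s (lo v) (hi v)) by (auto; lra).
    unfold gap_length. induction (gaps s) as [|[x y] g IHg]; [reflexivity|].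
    simpl. rewrite IHg. f_equal. unfold w, in_interval.
    destruct (Rle_dec (lo v) x), (Rlt_dec x (hi v)), (Rle_dec 0 x), (Rlt_dec x 1); ring || lra.
Qed.

Lemma in_convZ_nonneg n parent gamma v : in_convZ n parent gamma -> (v < n)%nat -> 0 <= gamma v.
Proof.
  intros [l [Hl [_ Hg]]] Hv. rewrite Hg by auto. clear Hg.
  induction l as [|p l IH]; simpl; [lra|]. inversion Hl as [|? ? [Hp _] Hl']; subst.
  pose proof (IH Hl'). destruct (snd p v); nra.
Qed.

Lemma in_convZ_sumR_le n parent (w : nat -> R) M gamma :
  (forall z, admissible n parent z -> sumR (verts n) (fun v => if z v then w v else 0) <= M) ->
  in_convZ n parent gamma -> sumR (verts n) (fun v => w v * gamma v) <= M.
Proof.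
  intros HM [l [Hl [Hw Hg]]]. change (weight_sum l = 1) in Hw.
  change (forall v, (v < n)%nat -> gamma v = mixture l v) in Hg.
  rewrite (sumR_ext _ _ (fun v => w v * mixture l v))
    by (intros v Hv; apply In_verts in Hv; rewrite Hg; auto).
  rewrite <- (Rmult_1_r M), <- Hw. clear Hg Hw.
  induction l as [|p l IH]; simpl.
  - rewrite (sumR_ext _ _ (fun _ => 0)), sumR_const0 by (intros; ring). lra.
  - inversion Hl as [|? ? [Hp Hz] Hl']; subst.
    rewrite (sumR_ext _ _ (fun v => fst p * (if snd p v then w v else 0) + w v * mixture l v))
      by (intros; destruct (snd p i); ring).
    rewrite sumR_plus, sumR_scal. pose proof (HM _ Hz). pose proof (IH Hl'). nra.
Qed.

(** * Sums with values in [R] extended by [-infinity] *)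

Lemma esum_Some_inv l f s : esum l f = Some s ->
  exists g, (forall i, In i l -> f i = Some (g i)) /\ s = sumR l g.
Proof.
  exists (fun i => match f i with Some y => y | None => 0 end).
  revert s H. induction l as [|a l IH]; simpl; intros s Hs.
  - injection Hs as <-. split; [contradiction|reflexivity].
  - destruct (f a) as [ya|] eqn:Ea; [|discriminate].
    destruct (esum l f) as [sl|]; [|discriminate]. injection Hs as <-.
    destruct (IH sl eq_refl) as [Hg ->]. split; [|reflexivity].
    intros i [<-|Hi]; [rewrite Ea; reflexivity|auto].
Qed.

Lemma esum_Some l f g : (forall i, In i l -> f i = Some (g i)) -> esum l f = Some (sumR l g).
Proof.
  induction l as [|a l IH]; simpl; intros H; [reflexivity|].
  rewrite H, IH by auto. reflexivity.
Qed.

(** * The recursion for [theta] and [kappa_star] *)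

Definition theta_kappa_step (alpha ph S : R) : R * R :=
  let kap := / (1 + Rpower ((1 - alpha) / ph * S) (1 / alpha)) in
  (Rpower kap (1 - alpha) * ph / (1 - alpha) + Rpower (1 - kap) (1 - alpha) * S, kap).

(* [kappa] maximises [k^(1-alpha) ph/(1-alpha) + (1-k)^(1-alpha) S] over [0,1]: the
   first-order condition is the last identity below, and [theta] is the optimal value. *)
Lemma theta_kappa_step_spec alpha ph S :
  0 < alpha -> alpha <> 1 -> 0 < ph -> 0 < (1 - alpha) * S ->
  let '(th, kap) := theta_kappa_step alpha ph S in
  0 < kap < 1 /\
  (1 - alpha) * th = ph * Rpower kap (- alpha) /\
  ph * Rpower kap (- alpha) = (1 - alpha) * S * Rpower (1 - kap) (- alpha).
Proof.
  intros Ha Ha1 Hph HS. unfold theta_kappa_step.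
  set (X := (1 - alpha) / ph * S).
  assert (HX : 0 < X).
  { unfold X. replace ((1 - alpha) / ph * S) with ((1 - alpha) * S / ph) by (field; lra).
    apply Rdiv_lt_0_compat; auto. }
  set (Y := Rpower X (1 / alpha)). assert (HY : 0 < Y) by apply Rpower_pos.
  set (k := / (1 + Y)).
  assert (Hk : 0 < k < 1).
  { unfold k. split; [apply Rinv_0_lt_compat; lra|].
    rewrite <- Rinv_1. apply Rinv_lt_contravar; lra. }
  assert (H1k : 1 - k = Y * k) by (unfold k; field; lra).
  assert (Hfoc : ph * Rpower k (- alpha) = (1 - alpha) * S * Rpower (1 - k) (- alpha)).
  { rewrite H1k, <- Rpower_mult_distr by lra. unfold Y. rewrite Rpower_mult.
    replace (1 / alpha * - alpha) with (- (1)) by (field; lra).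
    rewrite (Rpower_Ropp X 1), Rpower_1 by auto. unfold X. field.
    repeat split; try lra. intros ->. lra. }
  split; [exact Hk|split; [|exact Hfoc]].
  rewrite (Rpower_one_sub k), (Rpower_one_sub (1 - k)) by lra.
  replace ((1 - alpha) * (k * Rpower k (- alpha) * ph / (1 - alpha)
                          + (1 - k) * Rpower (1 - k) (- alpha) * S))
    with (k * (ph * Rpower k (- alpha)) + (1 - k) * ((1 - alpha) * S * Rpower (1 - k) (- alpha)))
    by (field; lra).
  rewrite <- Hfoc. ring.
Qed.

Section Kappa.
Variable n nK : nat.
Variable parent beam : nat -> nat.
Variable rate : nat -> R.
Variable alpha : R.
Hypothesis Htree : is_tree n parent.
Hypothesis Halpha : 0 < alpha.
Hypothesis Halpha1 : alpha <> 1.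

Local Notation ph := (phi nK beam rate alpha).
Local Notation tk := (theta_kappa n parent nK beam rate alpha).
Local Notation kap := (kappa_star n parent nK beam rate alpha).
Local Notation th := (theta n parent nK beam rate alpha).
Local Notation ch := (children n parent).

Lemma phi_pos v : 0 < ph v.
Proof. apply Rpower_pos. Qed.

Lemma theta_kappa_S f v : tk (S f) v =
  match ch v with
  | [] => (ph v / (1 - alpha), 1)
  | cs => theta_kappa_step alpha (ph v) (sumR cs (fun c => fst (tk f c)))
  end.
Proof. reflexivity. Qed.

(* [n - 1 - d] bounds the height of the subtree of [v], so more fuel changes nothing. *)
Lemma theta_kappa_stable f v d : (v < n)%nat -> is_depth parent v d -> (n - 1 <= d + f)%nat ->
  tk (S f) v = tk f v.
Proof.
  revert v d. induction f as [|f IH]; intros v d Hv Hd Hf.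
  - rewrite theta_kappa_S. destruct (ch v) as [|c cs] eqn:E; [reflexivity|exfalso].
    assert (Hc : In c (ch v)) by (rewrite E; left; reflexivity).
    pose proof (is_depth_child n parent Htree v c d Hd Hc) as Hcd.
    apply In_children in Hc.
    pose proof (is_depth_lt n parent Htree c (S d) (proj1 Hc) Hcd). lia.
  - rewrite !theta_kappa_S. destruct (ch v) as [|c cs] eqn:E; [reflexivity|].
    f_equal. apply sumR_ext. intros c' Hc. rewrite <- E in Hc.
    pose proof (is_depth_child n parent Htree v c' d Hd Hc) as Hcd.
    apply In_children in Hc. rewrite (IH c' (S d)); tauto || lia.
Qed.

Lemma theta_kappa_unfold v : (v < n)%nat -> tk n v =
  match ch v with
  | [] => (ph v / (1 - alpha), 1)
  | cs => theta_kappa_step alpha (ph v) (sumR cs th)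
  end.
Proof.
  intros Hv. assert (En : n = S (n - 1)) by lia.
  transitivity (tk (S (n - 1)) v); [rewrite <- En; reflexivity|]. rewrite theta_kappa_S.
  destruct (ch v) as [|c0 cs] eqn:E; [reflexivity|].
  f_equal. apply sumR_ext. intros c Hc. rewrite <- E in Hc. apply In_children in Hc.
  destruct (is_depth_exists n parent Htree c (proj1 Hc)) as [d Hd].
  unfold theta. replace (tk n c) with (tk (S (n - 1)) c) by (rewrite <- En; reflexivity).
  rewrite (theta_kappa_stable (n - 1) c d); lia || tauto.
Qed.

Lemma theta_kappa_bounds f v : (v < n)%nat ->
  0 < (1 - alpha) * fst (tk f v) /\ 0 < snd (tk f v) <= 1.
Proof.
  revert v. induction f as [|f IH]; intros v Hv.
  - simpl. pose proof (phi_pos v).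
    replace ((1 - alpha) * (ph v / (1 - alpha))) with (ph v) by (field; lra). lra.
  - rewrite theta_kappa_S. pose proof (phi_pos v).
    destruct (ch v) as [|c cs] eqn:E.
    + simpl. replace ((1 - alpha) * (ph v / (1 - alpha))) with (ph v) by (field; lra). lra.
    + assert (HS : 0 < (1 - alpha) * sumR (c :: cs) (fun c => fst (tk f c))).
      { rewrite <- sumR_scal. apply sumR_pos; [congruence|]. intros w Hw.
        rewrite <- E in Hw. apply In_children in Hw. apply IH. tauto. }
      pose proof (theta_kappa_step_spec alpha (ph v) _ Halpha Halpha1 H HS) as Hspec.
      destruct (theta_kappa_step _ _ _) as [t k]. destruct Hspec as [Hk [Ht _]]. simpl.
      rewrite Ht. split; [|lra]. apply Rmult_lt_0_compat; [lra|apply Rpower_pos].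
Qed.

Lemma kappa_star_range v : (v < n)%nat -> 0 < kap v <= 1.
Proof. intros Hv. apply (theta_kappa_bounds n v Hv). Qed.

Lemma scaled_theta_pos v : (v < n)%nat -> 0 < (1 - alpha) * th v.
Proof. intros Hv. apply (theta_kappa_bounds n v Hv). Qed.

Lemma kappa_star_leaf v : (v < n)%nat -> ch v = [] -> kap v = 1.
Proof. intros Hv E. unfold kappa_star. rewrite theta_kappa_unfold, E; auto. Qed.

Lemma scaled_sumR_children_theta_pos v : ch v <> [] -> 0 < (1 - alpha) * sumR (ch v) th.
Proof.
  intros Hne. rewrite <- sumR_scal. apply sumR_pos; auto.
  intros c Hc. apply In_children in Hc. apply scaled_theta_pos. tauto.
Qed.

Lemma scaled_theta_kappa_star v : (v < n)%nat ->
  (1 - alpha) * th v = ph v * Rpower (kap v) (- alpha).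
Proof.
  intros Hv. unfold theta, kappa_star. rewrite theta_kappa_unfold by auto.
  pose proof (scaled_sumR_children_theta_pos v) as HS.
  destruct (ch v) as [|c cs].
  - simpl. rewrite Rpower_base1. field. lra.
  - pose proof (theta_kappa_step_spec alpha (ph v) (sumR (c :: cs) th) Halpha Halpha1
                  (phi_pos v) (HS ltac:(congruence))) as Hspec.
    destruct (theta_kappa_step _ _ _). apply Hspec.
Qed.

Lemma kappa_star_internal v : (v < n)%nat -> ch v <> [] ->
  kap v < 1 /\
  ph v * Rpower (kap v) (- alpha) = (1 - alpha) * sumR (ch v) th * Rpower (1 - kap v) (- alpha).
Proof.
  intros Hv Hne. unfold kappa_star. rewrite theta_kappa_unfold by auto.
  pose proof (scaled_sumR_children_theta_pos v Hne) as HS.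
  destruct (ch v) as [|c cs]; [congruence|].
  pose proof (theta_kappa_step_spec alpha (ph v) (sumR (c :: cs) th) Halpha Halpha1
                (phi_pos v) HS) as Hspec.
  destruct (theta_kappa_step _ _ _). simpl. split; [lra|]. apply Hspec.
Qed.

End Kappa.

(** * Prices along the tree *)

Section Price.
Variable n nK : nat.
Variable parent beam : nat -> nat.
Variable rate : nat -> R.
Variable alpha : R.
Hypothesis Htree : is_tree n parent.
Hypothesis Halpha : 0 < alpha.
Hypothesis Halpha1 : alpha <> 1.

Local Notation ph := (phi nK beam rate alpha).
Local Notation kap := (kappa_star n parent nK beam rate alpha).
Local Notation th := (theta n parent nK beam rate alpha).
Local Notation ch := (children n parent).
Local Notation gs := (gamma_star n parent nK beam rate alpha).

Definition residual (v : nat) : R := prodR (ancestors n parent v) (fun u => 1 - kap u).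

(* The derivative at [gamma_star] of [ph v * g^(1-alpha)/(1-alpha)], the value of beam [v]'s
   share of the objective once the flows of [v] are split optimally. *)
Definition price (v : nat) : R := ph v * Rpower (gs v) (- alpha).

Lemma gamma_star_residual v : gs v = kap v * residual v.
Proof. reflexivity. Qed.

Lemma residual_pos v : (v < n)%nat -> 0 < residual v <= 1.
Proof.
  unfold residual, ancestors. revert v.
  enough (H : forall f v, (v < n)%nat -> 0 < prodR (anc_fuel parent f v) (fun u => 1 - kap u) <= 1)
    by (intros v; apply H).
  intros f. induction f as [|f IH]; intros v Hv; simpl; [lra|].
  destruct (Nat.eqb_spec v 0) as [_|Hv0]; simpl; [lra|].
  pose proof (parent_lt n parent Htree v Hv Hv0) as Hp.
  assert (Hne : ch (parent v) <> []).
  { intros E. pose proof (children_parent n parent v Hv Hv0) as Hc. rewrite E in Hc. exact Hc. }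
  pose proof (kappa_star_internal n nK parent beam rate alpha Htree Halpha Halpha1 _ Hp Hne).
  pose proof (kappa_star_range n nK parent beam rate alpha Halpha Halpha1 _ Hp).
  destruct (IH (parent v) Hp). split; nra.
Qed.

Lemma residual_child c : (c < n)%nat -> c <> 0%nat ->
  residual c = (1 - kap (parent c)) * residual (parent c).
Proof. intros. unfold residual. rewrite (ancestors_cons n parent Htree c); auto. Qed.

Lemma residual_root : residual 0 = 1.
Proof. unfold residual. rewrite (ancestors_root n parent Htree). reflexivity. Qed.

Lemma gamma_star_pos v : (v < n)%nat -> 0 < gs v.
Proof.
  intros Hv. rewrite gamma_star_residual.
  pose proof (residual_pos v Hv).
  pose proof (kappa_star_range n nK parent beam rate alpha Halpha Halpha1 v Hv). nra.
Qed.

Lemma price_pos v : 0 < price v.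
Proof. apply Rmult_lt_0_compat; [apply phi_pos|apply Rpower_pos]. Qed.

Lemma price_theta v : (v < n)%nat ->
  price v = (1 - alpha) * th v * Rpower (residual v) (- alpha).
Proof.
  intros Hv. unfold price. rewrite gamma_star_residual.
  pose proof (residual_pos v Hv).
  pose proof (kappa_star_range n nK parent beam rate alpha Halpha Halpha1 v Hv).
  rewrite <- Rpower_mult_distr by lra.
  rewrite (scaled_theta_kappa_star n nK parent beam rate alpha Htree Halpha Halpha1 v Hv). ring.
Qed.

Lemma price_children v : (v < n)%nat -> ch v <> [] -> price v = sumR (ch v) price.
Proof.
  intros Hv Hne.
  destruct (kappa_star_internal n nK parent beam rate alpha Htree Halpha Halpha1 v Hv Hne)
    as [Hk Hfoc].
  pose proof (residual_pos v Hv).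
  pose proof (kappa_star_range n nK parent beam rate alpha Halpha Halpha1 v Hv).
  set (q := Rpower (1 - kap v) (- alpha) * Rpower (residual v) (- alpha)).
  rewrite (sumR_ext _ _ (fun w => q * ((1 - alpha) * th w))).
  - rewrite !sumR_scal. unfold price, q. rewrite gamma_star_residual.
    rewrite <- Rpower_mult_distr by lra. rewrite <- Rmult_assoc, Hfoc. ring.
  - intros w Hw. apply In_children in Hw. destruct Hw as [Hwn [Hw0 Hpw]].
    rewrite price_theta, residual_child, Hpw by auto. unfold q.
    rewrite <- Rpower_mult_distr by lra. ring.
Qed.

(* At a leaf [kappa_star = 1], so both sides vanish. *)
Lemma price_balance v : (v < n)%nat ->
  (1 - kap v) * price v = (1 - kap v) * sumR (ch v) price.
Proof.
  intros Hv. destruct (ch v) eqn:E.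
  - rewrite kappa_star_leaf by auto. ring.
  - rewrite <- E, <- price_children by (auto; congruence). reflexivity.
Qed.

Lemma sumR_price_gamma_star : sumR (verts n) (fun v => price v * gs v) = price 0%nat.
Proof.
  rewrite (sumR_ext _ _ (fun v => price v * residual v
                                  - sumR (ch v) (fun w => price w * residual w))).
  - rewrite sumR_minus, sumR_children, residual_root by auto. ring.
  - intros v Hv. apply In_verts in Hv.
    rewrite (sumR_ext _ _ (fun w => ((1 - kap v) * residual v) * price w)).
    + rewrite sumR_scal, gamma_star_residual.
      replace ((1 - kap v) * residual v * sumR (ch v) price)
        with (residual v * ((1 - kap v) * sumR (ch v) price)) by ring.
      rewrite <- price_balance by auto. ring.
    + intros w Hw. apply In_children in Hw. destruct Hw as [Hwn [Hw0 Hpw]].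
      rewrite residual_child, Hpw by auto. ring.
Qed.

(* With [q v = 1] iff no ancestor of [v] is in [z], the quantity [q v * price v]
   is nonincreasing when passing from a vertex to its children, and drops by
   [price v] exactly when [v] is in [z]. *)
Lemma sumR_price_admissible_le z : admissible n parent z ->
  sumR (verts n) (fun v => if z v then price v else 0) <= price 0%nat.
Proof.
  intros Hz.
  set (q v := prodR (ancestors n parent v) (fun u => if z u then 0 else 1)).
  assert (Hq01 : forall v, 0 <= q v <= 1).
  { intros. apply prodR_unit_interval. intros; destruct (z i); lra. }
  assert (Hq0 : q 0%nat = 1) by (unfold q; rewrite (ancestors_root n parent Htree); reflexivity).
  apply Rle_trans with
    (sumR (verts n) (fun v => q v * price v - sumR (ch v) (fun w => q w * price w))).
  2: { rewrite sumR_minus, sumR_children, Hq0 by auto. lra. }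
  apply sumR_le. intros v Hv. apply In_verts in Hv.
  rewrite (sumR_ext _ _ (fun w => ((if z v then 0 else 1) * q v) * price w)).
  2: { intros w Hw. apply In_children in Hw. destruct Hw as [Hwn [Hw0 Hpw]].
       unfold q. rewrite (ancestors_cons n parent Htree w), Hpw by auto. reflexivity. }
  rewrite sumR_scal. destruct (z v) eqn:Ezv.
  - assert (Hqv : q v = 1).
    { unfold q. transitivity (prodR (ancestors n parent v) (fun _ => 1)); [|apply prodR_const1].
      apply prodR_ext.
      intros u Hu. rewrite (Hz v Hv u Hu Ezv). reflexivity. }
    rewrite Hqv. lra.
  - pose proof (price_pos v). pose proof (Hq01 v). destruct (ch v) eqn:E.
    + simpl. nra.
    + rewrite <- E, <- price_children by (auto; congruence). lra.
Qed.

Lemma residual_le_ancestor v u : (v < n)%nat -> In u (ancestors n parent v) ->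
  residual v <= (1 - kap u) * residual u.
Proof.
  unfold ancestors. generalize n at 2. intros f. revert v.
  induction f as [|f IH]; intros v Hv Hu; simpl in Hu; [contradiction|].
  destruct (Nat.eqb_spec v 0) as [_|Hv0]; [contradiction|].
  pose proof (parent_lt n parent Htree v Hv Hv0) as Hp.
  rewrite (residual_child v Hv Hv0).
  destruct Hu as [<-|Hu]; [lra|].
  pose proof (IH (parent v) Hp Hu).
  pose proof (residual_pos _ Hp).
  pose proof (kappa_star_range n nK parent beam rate alpha Halpha Halpha1 _ Hp). nra.
Qed.

(* Beam [v] is active on [1 - residual v, 1 - residual v + gamma_star v), an interval
   lying to the right of those of all its ancestors. *)
Lemma gamma_star_in_convZ : in_convZ n parent (gamma_star n parent nK beam rate alpha).
Proof.
  set (lo v := 1 - residual v). set (hi v := 1 - residual v + kap v * residual v).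
  assert (Hlh : forall v, (v < n)%nat -> 0 <= lo v <= hi v /\ hi v <= 1).
  { intros v Hv. unfold lo, hi.
    pose proof (residual_pos v Hv).
    pose proof (kappa_star_range n nK parent beam rate alpha Halpha Halpha1 v Hv). nra. }
  destruct (interval_lengths_convex n lo hi Hlh) as [l [Hl [Hw Hg]]].
  exists l. split; [|split; [exact Hw|]].
  - eapply Forall_impl; [|exact Hl]. intros [w z] [Hw0 [x Hz]]. split; [exact Hw0|].
    simpl in Hz |- *. subst z. intros v Hv u Hu Hzv. unfold in_interval in *.
    pose proof (residual_le_ancestor v u Hv Hu). unfold lo, hi in *.
    destruct (Rle_dec (1 - residual v) x); [|discriminate].
    destruct (Rle_dec (1 - residual u) x);
      [destruct (Rlt_dec x (1 - residual u + kap u * residual u))|]; lra || reflexivity.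
  - intros v Hv. transitivity (mixture l v); [|reflexivity].
    rewrite <- Hg by exact Hv. unfold hi, lo.
    rewrite gamma_star_residual. ring.
Qed.

End Price.

(** * Optimality and uniqueness *)

Section Optimality.
Variable n nK : nat.
Variable parent beam : nat -> nat.
Variable rate : nat -> R.
Variable alpha : R.
Hypothesis Htree : is_tree n parent.
Hypothesis Halpha : 0 < alpha.
Hypothesis Halpha1 : alpha <> 1.
Hypothesis Hrate : forall k, (k < nK)%nat -> 0 < rate k.
Hypothesis Hbeam : forall k, (k < nK)%nat -> (beam k < n)%nat.
Hypothesis Hnonempty : forall v, (v < n)%nat -> exists k, (k < nK)%nat /\ beam k = v.

Local Notation K := (flows_of nK beam).
Local Notation gs := (gamma_star n parent nK beam rate alpha).
Local Notation ds := (delta_star nK beam rate alpha).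
Local Notation pr := (price n nK parent beam rate alpha).
Local Notation W v := (sumR (K v) (fun k => Rpower (rate k) (1 / alpha - 1))).

Lemma flow_weights_pos v : (v < n)%nat -> 0 < W v.
Proof.
  intros Hv. apply sumR_pos; [|intros; apply Rpower_pos].
  destruct (Hnonempty v Hv) as [k Hk]. intros E.
  assert (Hin : In k (K v)) by (apply In_flows_of; exact Hk). rewrite E in Hin. exact Hin.
Qed.

Lemma delta_star_pos k : (k < nK)%nat -> 0 < ds k.
Proof.
  intros Hk. apply Rdiv_lt_0_compat; [apply Rpower_pos|apply flow_weights_pos; auto].
Qed.

Lemma sumR_delta_star v : (v < n)%nat -> sumR (K v) ds = 1.
Proof.
  intros Hv. pose proof (flow_weights_pos v Hv).
  rewrite (sumR_ext _ _ (fun k => / W v * Rpower (rate k) (1 / alpha - 1))).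
  - rewrite sumR_scal. field. lra.
  - intros k Hk. apply In_flows_of in Hk. destruct Hk as [_ Hbk].
    unfold delta_star. rewrite Hbk. unfold Rdiv. ring.
Qed.

Lemma delta_star_in_Delta : in_Delta n nK beam ds.
Proof.
  split; [|exact sumR_delta_star].
  intros k Hk. pose proof (delta_star_pos k Hk). split; [lra|].
  rewrite <- (sumR_delta_star (beam k)) by auto. apply sumR_ge_term.
  - intros i Hi. apply In_flows_of in Hi. pose proof (delta_star_pos i (proj1 Hi)). lra.
  - apply In_flows_of. auto.
Qed.

Lemma marginal_utility_star k : (k < nK)%nat ->
  Rpower (rate k * gs (beam k) * ds k) (- alpha) * rate k = pr (beam k).
Proof.
  intros Hk. set (v := beam k).
  pose proof (Hrate k Hk) as Hr.
  pose proof (gamma_star_pos n nK parent beam rate alpha Htree Halpha Halpha1 v (Hbeam k Hk)).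
  pose proof (flow_weights_pos v (Hbeam k Hk)) as HW.
  unfold price, phi, delta_star. fold v.
  set (w := W v) in *. unfold Rpower.
  assert (Hln : ln (rate k * gs v * (exp ((1 / alpha - 1) * ln (rate k)) / w))
                = ln (rate k) + ln (gs v) + (1 / alpha - 1) * ln (rate k) - ln w).
  { unfold Rdiv. rewrite !ln_mult, ln_Rinv, ln_exp
      by repeat first [lra | apply Rmult_lt_0_compat | apply Rinv_0_lt_compat | apply exp_pos].
    ring. }
  rewrite Hln. set (L := ln (rate k)).
  rewrite <- (exp_ln (rate k)) by exact Hr. fold L.
  rewrite <- !exp_plus. f_equal. field. lra.
Qed.

Local Notation obj := (objective n nK beam rate alpha).
Local Notation xs v k := (rate k * gs v * ds k).

Definition star_value : R :=
  sumR (verts n) (fun v => sumR (K v) (fun k => Rpower (xs v k) (1 - alpha) / (1 - alpha))).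

Lemma objective_star : obj ds gs = Some star_value.
Proof.
  apply esum_Some. intros v Hv. apply In_verts in Hv. apply esum_Some.
  intros k Hk. apply In_flows_of in Hk. destruct Hk as [Hk Hbk].
  unfold f_alpha. destruct (Rlt_dec 0 (xs v k)) as [_|Hx]; [reflexivity|].
  exfalso. apply Hx. pose proof (Hrate k Hk). pose proof (delta_star_pos k Hk).
  pose proof (gamma_star_pos n nK parent beam rate alpha Htree Halpha Halpha1 v Hv).
  apply Rmult_lt_0_compat; [apply Rmult_lt_0_compat|]; assumption.
Qed.

Lemma sumR_marginal_utility delta gamma v : in_Delta n nK beam delta -> (v < n)%nat ->
  sumR (K v) (fun k => Rpower (xs v k) (- alpha) * (rate k * gamma v * delta k - xs v k))
  = pr v * (gamma v - gs v).
Proof.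
  intros [_ Hdelta] Hv.
  rewrite (sumR_ext _ _ (fun k => pr v * gamma v * delta k - pr v * gs v * ds k)).
  - rewrite sumR_minus, !sumR_scal, Hdelta, sumR_delta_star by exact Hv. ring.
  - intros k Hk. apply In_flows_of in Hk. destruct Hk as [Hk Hbk].
    rewrite <- Hbk, <- (marginal_utility_star k Hk), Hbk. ring.
Qed.

Definition tangent_at_star (delta gamma : nat -> R) (v k : nat) : R :=
  Rpower (xs v k) (1 - alpha) / (1 - alpha)
  + Rpower (xs v k) (- alpha) * (rate k * gamma v * delta k - xs v k).

Lemma f_alpha_le_tangent_at_star delta gamma v k y :
  feasible n nK parent beam delta gamma -> (v < n)%nat -> In k (K v) ->
  f_alpha alpha (rate k * gamma v * delta k) = Some y ->
  y <= tangent_at_star delta gamma v k /\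
  (rate k * gamma v * delta k <> (xs v k) -> y < tangent_at_star delta gamma v k).
Proof.
  intros [Hconv [Hdelta _]] Hv Hk Hf. apply In_flows_of in Hk. destruct Hk as [Hk _].
  pose proof (Hrate k Hk). pose proof (delta_star_pos k Hk).
  pose proof (gamma_star_pos n nK parent beam rate alpha Htree Halpha Halpha1 v Hv).
  pose proof (in_convZ_nonneg n parent gamma v Hconv Hv). pose proof (Hdelta k Hk).
  assert (Hxs : 0 < xs v k) by (apply Rmult_lt_0_compat; [apply Rmult_lt_0_compat|]; assumption).
  assert (Hx : 0 <= rate k * gamma v * delta k)
    by (apply Rmult_le_pos; [apply Rmult_le_pos|]; lra).
  split.
  - exact (f_alpha_le_tangent alpha _ _ _ Halpha Halpha1 Hxs Hx Hf).
  - intros Hne. exact (f_alpha_lt_tangent alpha _ _ _ Halpha Halpha1 Hxs Hx Hne Hf).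
Qed.

(* Summing the tangent inequalities, the linear terms add up to
   [sum_v price v * (gamma v - gamma_star v)], which is [<= 0] since the linear form
   [price] is maximised over [conv Z] at [gamma_star]. *)
Lemma objective_tangent_bound delta gamma s :
  feasible n nK parent beam delta gamma -> obj delta gamma = Some s ->
  exists gap : nat -> nat -> R,
    (forall v k, (v < n)%nat -> In k (K v) ->
       0 <= gap v k /\ (rate k * gamma v * delta k <> (xs v k) -> 0 < gap v k)) /\
    s + sumR (verts n) (fun v => sumR (K v) (gap v)) <= star_value.
Proof.
  intros Hfeas Hobj. destruct (esum_Some_inv _ _ _ Hobj) as [sv [Hsv ->]].
  set (y v k := match f_alpha alpha (rate k * gamma v * delta k) with Some y => y | None => 0 end).
  assert (Hy : forall v, In v (verts n) ->
            (forall k, In k (K v) -> f_alpha alpha (rate k * gamma v * delta k) = Some (y v k))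
            /\ sv v = sumR (K v) (y v)).
  { intros v Hv. destruct (esum_Some_inv _ _ _ (Hsv v Hv)) as [y' [Hy' ->]].
    assert (Hyy : forall k, In k (K v) -> y v k = y' k)
      by (intros k Hk; unfold y; rewrite Hy'; auto).
    split; [intros k Hk; rewrite Hyy; auto | apply sumR_ext; intros; symmetry; auto]. }
  exists (fun v k => tangent_at_star delta gamma v k - y v k). split.
  - intros v k Hv Hk.
    pose proof (f_alpha_le_tangent_at_star delta gamma v k (y v k) Hfeas Hv Hk
                  (proj1 (Hy v (proj2 (In_verts v n) Hv)) k Hk)) as [Hle Hlt].
    split; [lra|]. intros Hne. specialize (Hlt Hne). lra.
  - assert (Hsum : forall v, In v (verts n) ->
              sumR (K v) (fun k => tangent_at_star delta gamma v k - y v k)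
              = sumR (K v) (fun k => Rpower (xs v k) (1 - alpha) / (1 - alpha))
                + (pr v * gamma v - pr v * gs v) - sv v).
    { intros v Hv. rewrite (proj2 (Hy v Hv)), sumR_minus. unfold tangent_at_star.
      rewrite sumR_plus, sumR_marginal_utility by (apply Hfeas || apply In_verts; exact Hv).
      ring. }
    rewrite (sumR_ext _ _ _ Hsum), !sumR_minus, sumR_plus, sumR_minus.
    rewrite (sumR_price_gamma_star n nK parent beam rate alpha Htree Halpha Halpha1).
    pose proof (in_convZ_sumR_le n parent pr (pr 0%nat) gamma
                  (sumR_price_admissible_le n nK parent beam rate alpha Htree Halpha Halpha1)
                  (proj1 Hfeas)).
    unfold star_value. lra.
Qed.

Lemma throughput_eq_star delta gamma : in_Delta n nK beam delta ->
  (forall v k, (v < n)%nat -> In k (K v) -> rate k * gamma v * delta k = xs v k) ->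
  (forall k, (k < nK)%nat -> delta k = ds k) /\ (forall v, (v < n)%nat -> gamma v = gs v).
Proof.
  intros [_ Hdelta] Hx.
  assert (Hg : forall v, (v < n)%nat -> gamma v = gs v).
  { intros v Hv.
    rewrite <- (Rmult_1_r (gamma v)), <- (Rmult_1_r (gs v)), <- (Hdelta v Hv) at 1.
    rewrite <- (sumR_delta_star v Hv), <- !sumR_scal. apply sumR_ext.
    intros k Hk. specialize (Hx v k Hv Hk). apply In_flows_of in Hk.
    pose proof (Hrate k (proj1 Hk)).
    apply Rmult_eq_reg_l with (rate k); [|lra]. rewrite <- !Rmult_assoc. exact Hx. }
  split; [|exact Hg].
  intros k Hk. pose proof (Hbeam k Hk) as Hv.
  specialize (Hx (beam k) k Hv (proj2 (In_flows_of nK beam (beam k) k) (conj Hk eq_refl))).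
  rewrite Hg in Hx by exact Hv.
  pose proof (Hrate k Hk).
  pose proof (gamma_star_pos n nK parent beam rate alpha Htree Halpha Halpha1 _ Hv).
  apply Rmult_eq_reg_l with (rate k * gs (beam k)); [exact Hx|].
  apply Rmult_integral_contrapositive; split; lra.
Qed.

Lemma objective_le_star delta gamma s :
  feasible n nK parent beam delta gamma -> obj delta gamma = Some s -> s <= star_value.
Proof.
  intros Hf Hobj. destruct (objective_tangent_bound delta gamma s Hf Hobj) as [gap [Hgap Hs]].
  enough (0 <= sumR (verts n) (fun v => sumR (K v) (gap v))) by lra.
  apply sumR_nonneg. intros v Hv. apply sumR_nonneg. intros k Hk.
  apply (Hgap v k); [apply In_verts|]; assumption.
Qed.

Lemma objective_eq_star delta gamma s :
  feasible n nK parent beam delta gamma -> obj delta gamma = Some s -> star_value <= s ->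
  (forall k, (k < nK)%nat -> delta k = ds k) /\ (forall v, (v < n)%nat -> gamma v = gs v).
Proof.
  intros Hf Hobj Hs. destruct (objective_tangent_bound delta gamma s Hf Hobj) as [gap [Hgap Hsum]].
  apply throughput_eq_star; [apply Hf|]. intros v k Hv Hk.
  assert (Hgap0 : forall v, In v (verts n) -> 0 <= sumR (K v) (gap v)).
  { intros v' Hv'. apply sumR_nonneg. intros k' Hk'. apply (Hgap v' k'); [apply In_verts|]; auto. }
  pose proof (sumR_nonneg_eq0 _ _ Hgap0 ltac:(lra) v (proj2 (In_verts v n) Hv)) as Hv0.
  assert (Hk0 : gap v k = 0).
  { apply (sumR_nonneg_eq0 (K v) (gap v)); [intros; apply Hgap| lra |]; auto. }
  destruct (Req_dec (rate k * gamma v * delta k) (xs v k)) as [|Hne]; [assumption|].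
  pose proof (proj2 (Hgap v k Hv Hk) Hne). lra.
Qed.

End Optimality.

Theorem theorem1 (n nK : nat) (parent beam : nat -> nat) (rate : nat -> R) (alpha : R)
  (Htree : is_tree n parent)
  (Halpha : 0 < alpha) (Halpha1 : alpha <> 1)
  (Hrate : forall k, (k < nK)%nat -> 0 < rate k)
  (Hbeam : forall k, (k < nK)%nat -> (beam k < n)%nat)
  (Hnonempty : forall v, (v < n)%nat -> exists k, (k < nK)%nat /\ beam k = v) :
  optimal n nK parent beam rate alpha
    (delta_star nK beam rate alpha) (gamma_star n parent nK beam rate alpha) /\
  forall delta gamma, optimal n nK parent beam rate alpha delta gamma ->
    (forall k, (k < nK)%nat -> delta k = delta_star nK beam rate alpha k) /\
    (forall v, (v < n)%nat -> gamma v = gamma_star n parent nK beam rate alpha v).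
Proof.
  pose proof (objective_star n nK parent beam rate alpha Htree Halpha Halpha1 Hrate Hbeam
              Hnonempty) as Hstar.
  assert (Hfeas : feasible n nK parent beam (delta_star nK beam rate alpha)
                    (gamma_star n parent nK beam rate alpha)).
  { split; [apply gamma_star_in_convZ | apply delta_star_in_Delta]; assumption. }
  split.
  - split; [exact Hfeas|]. intros delta gamma Hf. rewrite Hstar.
    destruct (objective n nK beam rate alpha delta gamma) as [s|] eqn:Hobj; [|exact I].
    exact (objective_le_star n nK parent beam rate alpha Htree Halpha Halpha1 Hrate Hbeam
             Hnonempty delta gamma s Hf Hobj).
  - intros delta gamma [Hf Hopt]. specialize (Hopt _ _ Hfeas). rewrite Hstar in Hopt.
    destruct (objective n nK beam rate alpha delta gamma) as [s|] eqn:Hobj; [|contradiction].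
    exact (objective_eq_star n nK parent beam rate alpha Htree Halpha Halpha1 Hrate Hbeam
             Hnonempty delta gamma s Hf Hobj Hopt).
Qed.
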